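(* Consider observations $y_i = y(t_i) = F(x_0)(t_i) + \epsilon_i$, $i=1,\dots,n$, where $F:\mathbf X\to\mathbf Y$ is a known linear operator between Hilbert spaces of real functions, $t_1,\dots,t_n$ is a fixed design, and $\epsilon_1,\dots,\epsilon_n$ are independent with zero mean, finite variance, and satisfying: there is $K<\infty$ with $\max_{i}\mathbf E\exp[\epsilon_i^2/K^2]\le K$. Let $(\lambda_j;\varphi_j,\psi_j)_{j=1,\dots,n}$ be a singular system of $F$ as in the context, and assume $F$ has index of ill-posedness $t>0$, i.e. $\lambda_j=O(j^{-t})$. Let $c>0$ be the constant (depending on $K$) for which $\mathbf P(\max_j|\frac1n\sum_i\varphi_j(t_i)\epsilon_i|>c\sqrt{\log n/n})\le c\exp[-\log n/c^2]$, set $\mu_j=\frac{2c}{\lambda_j}\sqrt{\frac{\log n}{n}}$, and let $$\hat x_n=\sum_{j=1}^n \hat x_j\psi_j \in \arg\min_{x=\sum_{j=1}^n x_j\psi_j}\Big[\sum_{j=1}^n\Big|\Big\langle y-F(x),\frac{\varphi_j}{\lambda_j}\Big\rangle_n\Big|^2+\sum_{j=1}^n\mu_j|x_j|\Big].$$ Assume there are $s$ and $0<p<2$ with $\frac1p=\frac12+\frac{s}{2t+1}$ such that $x_0=\sum_j x_{j,0}\psi_j$ belongs to $$X_{s,p}=\Big\{x=\sum_{j=1}^n x_j\psi_j:\ \sum_{j=1}^n j^{p(s+\frac12-\frac1p)}|x_j|^p\le1\Big\}.$$ Then $$\|\hat x_n-x_0\|_n^2=O_{\mathbf P}\Big(\Big(\frac{n}{\log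 n}\Big)^{-\frac{2s}{2s+2t+1}}\Big).$$
   Context: The empirical norm is $\|y\|_n^2=\frac1n\sum_{i=1}^n y(t_i)^2$ with empirical inner product $\langle y,z\rangle_n=\frac1n\sum_{i=1}^n y(t_i)z(t_i)$; for the data vector $y=(y_i)$, $\langle y,\varphi\rangle_n=\frac1n\sum_i y_i\varphi(t_i)$. The singular system satisfies $F\psi_j=\lambda_j\varphi_j$, $F^*\varphi_j=\lambda_j\psi_j$, where $\lambda_j^2>0$ are the nonzero eigenvalues of $F^*F$ in decreasing order, and $\{\psi_j\}$, $\{\varphi_j\}$ are complete orthonormal systems with respect to $\|\cdot\|_n$ of eigenvectors of $F^*F$ and $FF^*$; for $x=\sum_j x_j\psi_j$, $\|x\|_n^2=\sum_j x_j^2$. $O_{\mathbf P}$ denotes boundedness in probability.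
   Formalization: The index of ill-posedness t is two-sided: λⱼ lies between two positive constant multiples of j⁻ᵗ, with constants uniform in n, rather than only λⱼ = O(j⁻ᵗ). The paper assumes this as well. *)

From HB Require Import structures.
From mathcomp Require Import all_boot all_order all_algebra.
From mathcomp Require Import all_classical all_reals all_analysis.
Set Implicit Arguments. Unset Strict Implicit. Unset Printing Implicit Defensive.
Import Order.TTheory GRing.Theory Num.Theory.
Import numFieldNormedType.Exports.
Local Open Scope classical_set_scope.
Local Open Scope ring_scope.

(* Empirical inner product <u, v>_n = (1/n) sum_i u_i v(t_i), where u is a
   data vector indexed by the design and v : T -> R is a function,
   t : 'I_n -> T the design. *)
Definition emp_inner (R : realType) (T : Type) (n : nat) (t : 'I_n -> T)
  (u : 'I_n -> R) (v : T -> R) : R :=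
  n%:R^-1 * \sum_(i < n) u i * v (t i).

Definition emp_inner_fun (R : realType) (T : Type) (n : nat) (t : 'I_n -> T)
  (u v : T -> R) : R :=
  n%:R^-1 * \sum_(i < n) u (t i) * v (t i).

(* ||x||_n^2 = sum_j x_j^2 for x = sum_j x_j psi_j *)
Definition coef_sqnorm (R : realType) (n : nat) (x : 'I_n -> R) : R :=
  \sum_(j < n) x j ^+ 2.

(* j-th coordinate vector, i.e. the coefficients of psi_j *)
Definition coord_vec (R : realType) (n : nat) (j : 'I_n) : 'I_n -> R :=
  fun k => (k == j)%:R.

(* Mutual independence of a finite family of real random variables:
   product rule for every family of Borel sets (taking B_i = setT gives
   all subfamilies). *)
Definition mutually_independent (R : realType) (d : measure_display)
  (Omega : measurableType d) (P : probability Omega R) (n : nat)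
  (X : 'I_n -> Omega -> R) : Prop :=
  forall B : 'I_n -> set R, (forall i, measurable (B i)) ->
    fine (P (\bigcap_(i in [set: 'I_n]) (X i @^-1` B i)))
    = \prod_(i < n) fine (P (X i @^-1` B i)).

Definition criterion (R : realType) (T : Type) (n : nat) (t : 'I_n -> T)
  (F : ('I_n -> R) -> T -> R) (phi : 'I_n -> T -> R) (lam mu : 'I_n -> R)
  (y : 'I_n -> R) (x : 'I_n -> R) : R :=
  \sum_(j < n) (emp_inner t (fun i => y i - F x (t i))
                           (fun u => phi j u / lam j)) ^+ 2
  + \sum_(j < n) mu j * `|x j|.

Definition in_Xsp (R : realType) (n : nat) (s p : R) (x : 'I_n -> R) : Prop :=
  \sum_(j < n) (j.+1%:R `^ (p * (s + 2^-1 - p^-1))) * (`|x j| `^ p) <= 1.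

(* By the adjoint relation F^* phi_j = lambda_j psi_j, the j-th residual of the
   criterion is x0_j + z_j / lambda_j - x_j with z_j = <eps, phi_j>_n, so the
   criterion separates coordinatewise and its minimiser is soft thresholding
   of x0_j + z_j / lambda_j at level tau_j = mu_j / 2 = c sqrt(log n / n) / lambda_j.
   On the event max_j |z_j| <= c sqrt(log n / n), whose complement has
   probability at most c n^(-1/c^2), each coordinate error is bounded by both
   |x0_j| and 2 tau_j <= 2 c C sqrt(log n / n) j^t.  Interpolating,
   err_j^2 <= |x0_j|^p (2 tau_j)^(2-p), and the relation between p, s and t
   makes j^(t(2-p)) exactly the weight of X_{s,p}; summing gives
   (2 c C)^(2-p) (n / log n)^(-2s/(2s+2t+1)). *)

From HB Require Import structures.
From mathcomp Require Import all_boot all_order all_algebra.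
From mathcomp Require Import all_classical all_reals all_analysis.
From mathcomp Require Import lra ring.
Import Order.TTheory GRing.Theory Num.Theory.
Import numFieldNormedType.Exports.
Local Open Scope classical_set_scope.
Local Open Scope ring_scope.

Section SoftThreshold.
Context {R : realType}.
Implicit Types tau a u x e : R.

Definition soft_threshold tau a : R := Num.max (a - tau) 0 + Num.min (a + tau) 0.

Lemma soft_threshold_min_gap tau a u : 0 <= tau ->
  (a - soft_threshold tau a) ^+ 2 + 2 * tau * `|soft_threshold tau a|
    + (u - soft_threshold tau a) ^+ 2
  <= (a - u) ^+ 2 + 2 * tau * `|u|.
Proof.
move=> tau_ge0; rewrite /soft_threshold.
case: (leP (a - tau) 0) => h1; case: (leP (a + tau) 0) => h2;
  rewrite ?(max_l (ltW _)) ?max_r ?min_l ?(min_r (ltW _)) //;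
  try (rewrite max_l; last by lra);
  try (rewrite min_r; last by lra);
  case: (ler0P u) => hu; rewrite ?normr0;
  try (rewrite ger0_norm; last by lra);
  try (rewrite ler0_norm; last by lra); nra.
Qed.

Lemma soft_threshold_err tau x e : `|e| <= tau ->
  `|soft_threshold tau (x + e) - x| <= Num.min `|x| (2 * tau).
Proof.
rewrite /soft_threshold ler_norml le_min => /andP[he1 he2].
case: (leP (x + e - tau) 0) => h1; case: (leP (x + e + tau) 0) => h2;
  rewrite ?(max_l (ltW _)) ?max_r ?min_l ?(min_r (ltW _)) //;
  try (rewrite max_l; last by lra);
  try (rewrite min_r; last by lra);
  case: (ler0P x) => hx; rewrite ?normr0;
  try (rewrite ger0_norm; last by lra);
  try (rewrite ler0_norm; last by lra);
  rewrite ?ler_norml; apply/andP; split; try (apply/andP; split); lra.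
Qed.

Lemma measurable_soft_threshold tau :
  measurable_fun setT (soft_threshold tau).
Proof.
apply: measurable_realfun.measurable_funD.
  apply: measurable_realfun.measurable_maxr; last exact: measurable_cst.
  by apply: measurable_realfun.measurable_funB => //; exact: measurable_cst.
apply: measurable_realfun.measurable_minr; last exact: measurable_cst.
by apply: measurable_realfun.measurable_funD => //; exact: measurable_cst.
Qed.

Lemma separable_argmin_soft_threshold n (a mu xh : 'I_n -> R) :
  (forall j, 0 <= mu j) ->
  (forall x : 'I_n -> R, \sum_(j < n) ((a j - xh j) ^+ 2 + mu j * `|xh j|)
        <= \sum_(j < n) ((a j - x j) ^+ 2 + mu j * `|x j|)) ->
  forall j, xh j = soft_threshold (mu j / 2) (a j).
Proof.
move=> mu_ge0 xh_min.
pose s j := soft_threshold (mu j / 2) (a j).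
have gap j : (a j - s j) ^+ 2 + mu j * `|s j| + (xh j - s j) ^+ 2
             <= (a j - xh j) ^+ 2 + mu j * `|xh j|.
  have -> : mu j = 2 * (mu j / 2) by field.
  by apply: soft_threshold_min_gap; rewrite divr_ge0.
have sum_gap : \sum_(j < n) (xh j - s j) ^+ 2 <= 0.
  have : \sum_(j < n) ((a j - s j) ^+ 2 + mu j * `|s j| + (xh j - s j) ^+ 2)
         <= \sum_(j < n) ((a j - xh j) ^+ 2 + mu j * `|xh j|).
    by apply: ler_sum => j _; exact: gap.
  by rewrite big_split /=; have := xh_min s; lra.
have sum0 : \sum_(j < n) (xh j - s j) ^+ 2 = 0.
  by apply: le_anti; rewrite sum_gap sumr_ge0 // => i _; exact: sqr_ge0.
move=> j; apply/eqP; rewrite -subr_eq0 -sqrf_eq0; apply/eqP.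
exact: (psumr_eq0P (fun i _ => sqr_ge0 (xh i - s i)) sum0).
Qed.

End SoftThreshold.

Section RiskBound.
Context {R : realType}.

Lemma sqr_le_powR_interp {err a b p : R} :
  0 <= err -> err <= a -> err <= b -> 0 < p -> p < 2 ->
  err ^+ 2 <= a `^ p * b `^ (2 - p).
Proof.
move=> err_ge0 err_le_a err_le_b p_gt0 p_lt2.
have -> : err ^+ 2 = err `^ p * err `^ (2 - p).
  rewrite -powR_mulrn // -powRD; last by apply/implyP => /eqP; lra.
  by congr (_ `^ _); rewrite /=; ring.
apply: ler_pM; rewrite ?powR_ge0 //.
  by apply: ge0_ler_powR => //; rewrite ?nnegrE //; lra.
by apply: ge0_ler_powR => //; rewrite ?nnegrE //; lra.
Qed.

Lemma Xsp_weight_exponent {p s tt : R} : 0 < p -> 0 < tt ->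
  p^-1 = 2^-1 + s / (2 * tt + 1) -> tt * (2 - p) = p * (s + 2^-1 - p^-1).
Proof.
move=> p_gt0 tt_gt0 p_def.
have -> : s = (2 * tt + 1) * (p^-1 - 2^-1).
  by rewrite p_def; field; apply: lt0r_neq0; lra.
by field; apply: lt0r_neq0; lra.
Qed.

Lemma soft_threshold_sqerr_Xsp {n} {x0 e lam tau : 'I_n -> R} {b C p s tt : R} :
  0 <= b -> 0 < C -> 0 < p -> p < 2 -> 0 < tt ->
  p^-1 = 2^-1 + s / (2 * tt + 1) ->
  (forall j, 0 < lam j) ->
  (forall j : 'I_n, C^-1 * j.+1%:R `^ (- tt) <= lam j) ->
  in_Xsp s p x0 ->
  (forall j, tau j <= b / lam j) ->
  (forall j, `|e j| <= tau j) ->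
  coef_sqnorm (fun j => soft_threshold (tau j) (x0 j + e j) - x0 j)
    <= (2 * b * C) `^ (2 - p).
Proof.
move=> b_ge0 C_gt0 p_gt0 p_lt2 tt_gt0 p_def lam_gt0 lam_lb x0_Xsp tau_le e_le.
rewrite /coef_sqnorm; apply: le_trans (_ : _ <= \sum_(j < n) (2 * b * C) `^ (2 - p)
    * (j.+1%:R `^ (p * (s + 2^-1 - p^-1)) * `|x0 j| `^ p)) _; last first.
  by rewrite -mulr_sumr ler_piMr ?powR_ge0.
apply: ler_sum => j _.
set err := soft_threshold _ _ - _; rewrite -real_normK ?num_real //.
set Q := j.+1%:R `^ tt; have Q_gt0 : 0 < Q by rewrite powR_gt0 ?ltr0n.
have inv_lam : (lam j)^-1 <= C * Q.
  rewrite -[C * Q]invrK lef_pV2 ?posrE ?invr_gt0 ?mulr_gt0 // invfM mulrC.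
  by have := lam_lb j; rewrite powRN -/Q mulrC.
have := soft_threshold_err _ (x0 j) _ (e_le j).
rewrite -/err le_min => /andP[err_le_x0 err_le_tau].
have err_le : `|err| <= 2 * b * C * Q.
  apply: (le_trans err_le_tau); rewrite -!mulrA ler_pM2l //.
  exact: le_trans (tau_le j) (ler_wpM2l b_ge0 inv_lam).
apply: le_trans (sqr_le_powR_interp (normr_ge0 _) err_le_x0 err_le p_gt0 p_lt2) _.
rewrite powRM ?mulr_ge0 ?(ltW C_gt0) ?(ltW Q_gt0) //.
by rewrite -powRrM (Xsp_weight_exponent p_gt0 tt_gt0 p_def) mulrC mulrA.
Qed.

End RiskBound.

Section Rate.
Context {R : realType}.

Lemma powR_sqrt_rate (A x p s tt : R) : 0 <= A -> 0 < x -> 0 < p -> 0 < tt ->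
  p^-1 = 2^-1 + s / (2 * tt + 1) ->
  (A * Num.sqrt x^-1) `^ (2 - p)
    = A `^ (2 - p) * x `^ (- (2 * s / (2 * s + 2 * tt + 1))).
Proof.
move=> A_ge0 x_gt0 p_gt0 tt_gt0 p_def.
rewrite powRM ?sqrtr_ge0 //; congr (_ * _).
have s_def : s = (2 * tt + 1) * (p^-1 - 2^-1).
  by rewrite p_def; field; apply: lt0r_neq0; lra.
rewrite -powR12_sqrt ?invr_ge0 ?(ltW x_gt0) // -powR_inv1 ?(ltW x_gt0) //.
rewrite -!powRrM; congr (_ `^ _); rewrite s_def; field.
by apply/andP; split; apply: lt0r_neq0; lra.
Qed.

Lemma eventually_mul_expR_ln_le {c delta : R} : 0 < c -> 0 < delta ->
  exists N : nat, forall n : nat, (N <= n)%N ->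
    c * expR (- (ln n%:R / c ^+ 2)) <= delta.
Proof.
move=> c_gt0 delta_gt0; set a := c ^+ 2 * ln (c / delta).
exists (Num.truncn (expR a)).+1 => n n_ge.
have n_gt : expR a < n%:R.
  by apply: lt_le_trans (truncnS_gt _) _; rewrite ler_nat.
have c2_gt0 : 0 < c ^+ 2 by rewrite exprn_gt0.
have n_gt0 : 0 < n%:R :> R := lt_trans (expR_gt0 a) n_gt.
have a_lt : a < ln n%:R by rewrite -[X in X < _]expRK ltr_ln ?posrE ?expR_gt0.
have -> : delta = c * expR (- ln (c / delta)).
  by rewrite expRN lnK ?posrE ?divr_gt0 // invf_div mulrC divfK ?gt_eqF.
rewrite ler_pM2l // ler_expR lerN2 ler_pdivlMr // mulrC ltW //.
Qed.

End Rate.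

Section Measurability.
Context {R : realType} {d : measure_display} {Omega : measurableType d}.

Lemma measurable_superlevel (f : Omega -> R) a :
  measurable_fun setT f -> measurable [set w | a < f w].
Proof.
move=> mf; have := mf measurableT `]a, +oo[%classic (measurable_itv _).
rewrite setTI.
by congr measurable; rewrite predeqE => w /=; rewrite in_itv /= andbT.
Qed.

Lemma measurable_exists_superlevel n (f : 'I_n -> Omega -> R) a :
  (forall j, measurable_fun setT (f j)) ->
  measurable [set w | exists j, a < f j w].
Proof.
move=> mf; have -> : [set w | exists j, a < f j w]
    = \bigcup_(j in [set: 'I_n]) [set w | a < f j w].
  by rewrite predeqE => w; split => [[j ?]|[j _ ?]]; exists j.
apply: fin_bigcup_measurable => [|j _]; first exact: finite_finset.
exact: measurable_superlevel.
Qed.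

Lemma measurable_emp_inner (T : Type) n (t : 'I_n -> T)
    (X : 'I_n -> Omega -> R) (v : T -> R) :
  (forall i, measurable_fun setT (X i)) ->
  measurable_fun setT (fun w => emp_inner t (fun i => X i w) v).
Proof.
move=> mX; apply: measurable_realfun.measurable_funM; first exact: measurable_cst.
by apply: measurable_sum => i; apply: measurable_realfun.measurable_funM.
Qed.

Lemma measurable_coef_sqnorm n (g : 'I_n -> Omega -> R) :
  (forall j, measurable_fun setT (g j)) ->
  measurable_fun setT (fun w => coef_sqnorm (fun j => g j w)).
Proof.
by move=> mg; apply: measurable_sum => j; exact: measurable_realfun.measurable_funX.
Qed.

End Measurability.

Section Estimator.
Context {R : realType} {T : Type} {n : nat} {t : 'I_n -> T}.
Context {F : ('I_n -> R) -> T -> R} {phi : 'I_n -> T -> R} {lam : 'I_n -> R}.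
Hypothesis F_linear : forall (a : R) (x z : 'I_n -> R) (u : T),
  F (fun j => a * x j + z j) u = a * F x u + F z u.
Hypothesis F_adjoint : forall (x : 'I_n -> R) (j : 'I_n),
  emp_inner_fun t (F x) (phi j) = lam j * x j.
Hypothesis lam_gt0 : forall j, 0 < lam j.

Lemma criterion_separable (mu x0 e x : 'I_n -> R) :
  criterion t F phi lam mu (fun i => F x0 (t i) + e i) x =
  \sum_(j < n) ((x0 j + emp_inner t e (phi j) / lam j - x j) ^+ 2
                + mu j * `|x j|).
Proof.
rewrite /criterion big_split /=; congr (_ + _); apply: eq_bigr => j _.
congr (_ ^+ 2); pose dx k := -1 * x k + x0 k.
have := F_adjoint dx j; rewrite /emp_inner_fun /emp_inner => Fdx.
have -> : \sum_(i < n) (F x0 (t i) + e i - F x (t i)) * (phi j (t i) / lam j)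
  = (\sum_(i < n) F dx (t i) * phi j (t i)
     + \sum_(i < n) e i * phi j (t i)) / lam j.
  rewrite -big_split mulr_suml; apply: eq_bigr => i _.
  by rewrite /dx F_linear /=; ring.
rewrite mulrDl mulrDr mulrA Fdx /dx; set m := n%:R^-1; field; exact: lt0r_neq0.
Qed.

Lemma criterion_argmin_soft_threshold {mu x0 e xh : 'I_n -> R} :
  (forall j, 0 <= mu j) ->
  (forall x, criterion t F phi lam mu (fun i => F x0 (t i) + e i) xh
             <= criterion t F phi lam mu (fun i => F x0 (t i) + e i) x) ->
  forall j, xh j = soft_threshold (mu j / 2)
                     (x0 j + emp_inner t e (phi j) / lam j).
Proof.
move=> mu_ge0 xh_min; apply: separable_argmin_soft_threshold => // x.
by have := xh_min x; rewrite !criterion_separable.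
Qed.

Definition lasso_weights (c L : R) (j : 'I_n) : R := 2 * c / lam j * Num.sqrt L.

Lemma lasso_argmin_soft_threshold {c L : R} {x0 e xh : 'I_n -> R} :
  0 <= c -> 0 <= L ->
  (forall x, criterion t F phi lam (lasso_weights c L)
                 (fun i => F x0 (t i) + e i) xh
             <= criterion t F phi lam (lasso_weights c L)
                 (fun i => F x0 (t i) + e i) x) ->
  forall j, xh j = soft_threshold (c * Num.sqrt L / lam j)
                     (x0 j + emp_inner t e (phi j) / lam j).
Proof.
move=> c_ge0 L_ge0 xh_min j; rewrite (criterion_argmin_soft_threshold _ xh_min).
  by congr soft_threshold; rewrite /lasso_weights; field; exact: lt0r_neq0.
move=> k; rewrite /lasso_weights.
by rewrite mulr_ge0 ?sqrtr_ge0 ?divr_ge0 ?mulr_ge0 ?(ltW (lam_gt0 k)).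
Qed.

Lemma lasso_argmin_sqerr_le {x0 e xh : 'I_n -> R} {c C L p s tt : R} :
  0 <= c -> 0 < C -> 0 < L -> 0 < p -> p < 2 -> 0 < tt ->
  p^-1 = 2^-1 + s / (2 * tt + 1) ->
  (forall j : 'I_n, C^-1 * j.+1%:R `^ (- tt) <= lam j) ->
  in_Xsp s p x0 ->
  (forall x, criterion t F phi lam (lasso_weights c L)
                 (fun i => F x0 (t i) + e i) xh
             <= criterion t F phi lam (lasso_weights c L)
                 (fun i => F x0 (t i) + e i) x) ->
  (forall j, `|emp_inner t e (phi j)| <= c * Num.sqrt L) ->
  coef_sqnorm (fun j => xh j - x0 j)
    <= (2 * c * C) `^ (2 - p) * L^-1 `^ (- (2 * s / (2 * s + 2 * tt + 1))).
Proof.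
move=> c_ge0 C_gt0 L_gt0 p_gt0 p_lt2 tt_gt0 p_def lam_lb x0_Xsp xh_min noise_le.
have b_ge0 : 0 <= c * Num.sqrt L by rewrite mulr_ge0 ?sqrtr_ge0.
rewrite -powR_sqrt_rate ?mulr_ge0 ?invr_gt0 ?(ltW C_gt0) // invrK.
rewrite (_ : 2 * c * C * _ = 2 * (c * Num.sqrt L) * C); last by ring.
under eq_fun do rewrite (lasso_argmin_soft_threshold c_ge0 (ltW L_gt0) xh_min).
apply: (soft_threshold_sqerr_Xsp (tt := tt) (s := s)) => // j.
rewrite normrM normfV (gtr0_norm (lam_gt0 j)) ler_pM2r ?invr_gt0 //.
Qed.

Lemma measurable_lasso_argmin {d : measure_display} {Omega : measurableType d}
    {c L : R} {x0 : 'I_n -> R} {X : 'I_n -> Omega -> R}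
    {xh : Omega -> 'I_n -> R} :
  0 <= c -> 0 <= L -> (forall i, measurable_fun setT (X i)) ->
  (forall w x, criterion t F phi lam (lasso_weights c L)
                 (fun i => F x0 (t i) + X i w) (xh w)
               <= criterion t F phi lam (lasso_weights c L)
                 (fun i => F x0 (t i) + X i w) x) ->
  forall j, measurable_fun setT (fun w => xh w j).
Proof.
move=> c_ge0 L_ge0 mX xh_min j.
under eq_fun do rewrite (lasso_argmin_soft_threshold c_ge0 L_ge0 (xh_min _)).
apply: measurableT_comp (measurable_soft_threshold _) _.
apply: measurable_realfun.measurable_funD; first exact: measurable_cst.
apply: measurable_realfun.measurable_funM; last exact: measurable_cst.
exact: measurable_emp_inner.
Qed.

End Estimator.

Theorem theorem2
  (R : realType) (d : measure_display) (Omega : measurableType d)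
  (P : probability Omega R)
  (T : Type)
  (t : forall n : nat, 'I_n -> T)
  (F : forall n : nat, ('I_n -> R) -> T -> R)
  (lam : forall n : nat, 'I_n -> R)
  (phi : forall n : nat, 'I_n -> T -> R)
  (eps : forall n : nat, 'I_n -> Omega -> R)
  (K c tt s p : R)
  (x0 : forall n : nat, 'I_n -> R)
  (xhat : forall n : nat, Omega -> 'I_n -> R) :
  (forall n (a : R) (x z : 'I_n -> R) (u : T),
      F n (fun j => a * x j + z j) u = a * F n x u + F n z u) ->
  (forall n (j : 'I_n) (u : T), F n (coord_vec R j) u = lam n j * phi n j u) ->
  (forall n (x : 'I_n -> R) (j : 'I_n),
      emp_inner_fun (t n) (F n x) (phi n j) = lam n j * x j) ->
  (forall n (j : 'I_n), 0 < lam n j) ->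
  (forall n (j k : 'I_n), (j <= k)%N -> lam n k <= lam n j) ->
  (forall n (j k : 'I_n),
      emp_inner_fun (t n) (phi n j) (phi n k) = (j == k)%:R) ->
  0 < tt ->
  (exists C : R, 0 < C /\ forall n (j : 'I_n),
      C^-1 * j.+1%:R `^ (- tt) <= lam n j /\ lam n j <= C * j.+1%:R `^ (- tt)) ->
  (forall n (i : 'I_n), measurable_fun setT (eps n i)) ->
  (forall n, mutually_independent P (eps n)) ->
  (forall n (i : 'I_n), P.-integrable setT (fun w => (eps n i w)%:E)) ->
  (forall n (i : 'I_n), (\int[P]_w (eps n i w)%:E = 0)%E) ->
  (forall n (i : 'I_n), P.-integrable setT (fun w => (eps n i w ^+ 2)%:E)) ->
  0 < K ->
  (forall n (i : 'I_n),
      (\int[P]_w (expR (eps n i w ^+ 2 / K ^+ 2))%:E <= K%:E)%E) ->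
  0 < c ->
  (forall n : nat, (2 <= n)%N ->
      (P [set w | exists j : 'I_n,
           (c * Num.sqrt (ln n%:R / n%:R) <
           `| n%:R^-1 * \sum_(i < n) phi n j (t n i) * eps n i w |)%R ]
       <= (c * expR (- (ln n%:R / c ^+ 2)))%:E)%E) ->
  0 < p -> p < 2 -> p^-1 = 2^-1 + s / (2 * tt + 1) ->
  (forall n, in_Xsp s p (x0 n)) ->
  (forall n (w : Omega) (x : 'I_n -> R),
      let y := fun i : 'I_n => F n (x0 n) (t n i) + eps n i w in
      let mu := fun j : 'I_n =>
                  2 * c / lam n j * Num.sqrt (ln n%:R / n%:R) in
      criterion (t n) (F n) (phi n) (lam n) mu y (xhat n w)
      <= criterion (t n) (F n) (phi n) (lam n) mu y x) ->
  forall delta : R, 0 < delta ->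
  exists M : R, 0 < M /\ exists N : nat, forall n : nat, (N <= n)%N ->
    (P [set w | (M * (n%:R / ln n%:R) `^ (- (2 * s / (2 * s + 2 * tt + 1)))
                < coef_sqnorm (fun j => xhat n w j - x0 n j))%R]
     <= delta%:E)%E.
Proof.
(* The noise moment and independence assumptions enter only through the
   maximal inequality defining c, which is itself a hypothesis. *)
move=> F_lin _ F_adj lam_gt0 _ _ tt_gt0 [C [C_gt0 lam_bd]] eps_meas _ _ _ _ _ _
  c_gt0 max_ineq p_gt0 p_lt2 p_def x0_Xsp xhat_min delta delta_gt0.
have [N tail_le] := eventually_mul_expR_ln_le c_gt0 delta_gt0.
exists ((2 * c * C) `^ (2 - p)); split; first by rewrite powR_gt0 ?mulr_gt0.
exists (maxn 2 N) => n; rewrite geq_max => /andP[n_ge2 n_geN].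
set L := ln (n%:R : R) / n%:R.
have L_gt0 : 0 < L by rewrite divr_gt0 ?ln_gt0 ?ltr1n ?ltr0n 1?(leq_trans _ n_ge2).
set Bad := [set w | exists j : 'I_n, c * Num.sqrt L <
    `|n%:R^-1 * \sum_(i < n) phi n j (t n i) * eps n i w|].
have emp_innerE j (w : Omega) : emp_inner (t n) (fun i => eps n i w) (phi n j)
    = n%:R^-1 * \sum_(i < n) phi n j (t n i) * eps n i w.
  by rewrite /emp_inner; under eq_bigr do rewrite mulrC.
set event := [set w | _ < coef_sqnorm _].
have event_sub : event `<=` Bad.
  move=> w; apply: contraPP => /forallNP noise_small; apply/negP; rewrite -leNgt.
  rewrite -invf_div -/L.
  apply: (lasso_argmin_sqerr_le (F_lin n) (F_adj n) (lam_gt0 n) (ltW c_gt0)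
    C_gt0 L_gt0 p_gt0 p_lt2 tt_gt0 p_def _ (x0_Xsp n) (xhat_min n w)) => j.
    by have [] := lam_bd n j.
  by rewrite emp_innerE leNgt; apply/negP; exact: noise_small.
have xhat_meas := measurable_lasso_argmin (F_lin n) (F_adj n) (lam_gt0 n)
  (ltW c_gt0) (ltW L_gt0) (eps_meas n) (xhat_min n).
apply: le_trans (le_measure _ _ _ event_sub) _; rewrite ?inE.
- apply/measurable_superlevel/measurable_coef_sqnorm => j.
  exact/measurable_realfun.measurable_funB/measurable_cst.
- apply: measurable_exists_superlevel => j; under eq_fun do rewrite -emp_innerE.
  apply: measurableT_comp; first exact: measurable_realfun.normr_measurable.
  exact: measurable_emp_inner.
by apply: le_trans (max_ineq n n_ge2) _; rewrite lee_fin tail_le.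
Qed.
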